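(* Let $G=\langle a\rangle\times\langle b\rangle\cong\mathbb{Z}\times\mathbb{Z}$ and let $\mathcal{A}$ be a Schur ring over $G$ such that $\langle a^k\rangle$ is an $\mathcal{A}$-subgroup for some nonzero integer $k$. Let $D$ be the basic set of $\mathcal{A}$ containing $b$. Then one of the following holds: (i) $D=\{b\}$; (ii) $D=\{b,b^{-1}\}$; (iii) $D=\{ba^{i_0},b\}$ for some nonzero integer $i_0$; (iv) $D=\{b^{-1}a^{i_1},b\}$ for some nonzero integer $i_1$; (v) $D=\{b,\,ba^{i_2},\,b^{-1},\,b^{-1}a^{-i_2}\}$ for some nonzero integer $i_2$.
   Context: $\mathbb{F}$ is a field of characteristic $0$. A Schur ring over a group $G$ is a subspace $\mathcal{A}\subseteq\mathbb{F}[G]$ spanned by the elements $\underline{D}=\sum_{g\in D}g$, $D\in\mathcal{D}$, where $\mathcal{D}$ is a partition of $G$ into finite subsets such that $\{1\}\in\mathcal{D}$, $D\in\mathcal{D}\Rightarrow D^{-1}\in\mathcal{D}$, and each product $\underline{D_1}\,\underline{D_2}$ is a finite $\mathbb{F}$-linear combination of the $\underline{D}$, $D\in\mathcal{D}$. The elements of $\mathcal{D}$ are basic sets; an $\mathcal{A}$-subgroup is a subgroup which is a union of basic sets. *)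

From HB Require Import structures.
From mathcomp Require Import all_boot all_order all_algebra.
From Stdlib Require Import ClassicalEpsilon.
Set Implicit Arguments. Unset Strict Implicit. Unset Printing Implicit Defensive.
Import Order.TTheory GRing.Theory Num.Theory.
Local Open Scope ring_scope.

(* G = <a> x <b> ~ Z x Z, written additively: a = (1,0), b = (0,1). *)
Definition Zsq := (int * int)%type.
Definition gen_a : Zsq := (1, 0).
Definition gen_b : Zsq := (0, 1).

(* A partition D of G is represented by its equivalence relation R:
   the basic set containing g is { h | R g h }. *)
Definition enumerates (R : Zsq -> Zsq -> Prop) (g : Zsq) (s : seq Zsq) :=
  uniq s /\ forall h, h \in s <-> R g h.

(* coefficient of h in  underline(D1) * underline(D2)  in F[G] *)
Definition prod_coeff (s1 s2 : seq Zsq) (h : Zsq) : nat :=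
  \big[addn/0%N]_(x <- s1) count (fun y => x + y == h) s2.

Definition ind (F : fieldType) (P : Prop) : F :=
  if excluded_middle_informative P then 1 else 0.

Definition is_schur_ring (F : fieldType) (R : Zsq -> Zsq -> Prop) : Prop :=
  (forall g, R g g) /\
      (forall g h, R g h -> R h g) /\
      (forall g h k, R g h -> R h k -> R g k) /\
      (forall g, exists s, enumerates R g s) /\
      (* {1} is a basic set (identity = 0 additively) *)
      (forall h, R 0 h <-> h = 0) /\
      (* D in partition -> D^{-1} in partition *)
      (forall g h, R g h <-> R (- g) (- h)) /\
      (* product of basic-set sums is a finite F-linear combination of
         basic-set sums *)
      (forall g1 g2 s1 s2, enumerates R g1 s1 -> enumerates R g2 s2 ->
         exists (reps : seq (Zsq * F)),
           forall h, (prod_coeff s1 s2 h)%:R =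
             \sum_(p <- reps) p.2 * ind F (R p.1 h)).

(* H is an A-subgroup: union of basic sets (subgroup property is given). *)
Definition union_of_basic_sets (R : Zsq -> Zsq -> Prop) (H : Zsq -> Prop) :=
  forall g h, R g h -> H g -> H h.

Definition cyc_ak (k : int) : Zsq -> Prop :=
  fun g => g.2 = 0 /\ exists m : int, g.1 = k * m.

From mathcomp Require Import all_boot all_order all_algebra zify ring.
From Stdlib Require Import ClassicalEpsilon.
Import GRing.Theory Num.Theory.
Local Open Scope ring_scope.
Set Implicit Arguments. Unset Strict Implicit.

(* Two consequences of the Schur-ring axioms do all the work.  If u + v lies in a
   basic set T, then every element of T is u' + v' with u' ~ u and v' ~ v, because
   the coefficient of u + v in D_u D_v is positive and coefficients of a product are
   constant on basic sets.  In characteristic 0 the Frobenius congruence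
   D^p = D^(p) (mod p) shows that the basic set of y^p consists of p-th powers of
   elements of the basic set of y.  With Bezout for k and a large prime p, these
   confine the basic set of a^t to {a^t, a^-t} and D to the cosets b<a> and b^-1<a>.
   As D is finite, the a-shifts of a point inside D are rigid: each row of D has at
   most two points, differing by one fixed shift a^m, and a nontrivial shift occurs
   only when a ~ a^-1.  In that case the products of the two rows of D form a set
   closed under inversion, which pins the second row down to {b^-1, b^-1 a^-m}. *)

Lemma Zsq_ext (p q : Zsq) : p.1 = q.1 -> p.2 = q.2 -> p = q.
Proof. by case: p q => a b [c d] /= -> ->. Qed.

Lemma Zsq_mulrn (x : Zsq) n : x *+ n = (x.1 * n%:Z, x.2 * n%:Z).
Proof.
elim: n => [|n IH]; first by apply: Zsq_ext; rewrite /= mulr0.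
by rewrite mulrS IH; apply: Zsq_ext; rewrite /= intS mulrDr mulr1.
Qed.

Lemma Zsq_shift (x e s : int) : (x, e) + (s, 0) = (x + s, e).
Proof. by apply: Zsq_ext; rewrite /= ?addr0. Qed.

Lemma Zsq_mulrnI n : (0 < n)%N -> injective (fun x : Zsq => x *+ n).
Proof.
move=> n_gt0 x y /=; rewrite !Zsq_mulrn => -[E1 E2].
have nz : n%:Z != 0 by rewrite eqz_nat -lt0n.
by apply: Zsq_ext; apply: (mulIf nz).
Qed.

Lemma int_prime_factor (z : int) : (1 < `|z|)%N ->
  exists p q, prime p /\ z = q * p%:Z.
Proof.
move=> z_gt1; have /dvdnP [q Eq] := pdiv_dvd `|z|.
exists (pdiv `|z|); case: z z_gt1 Eq => n z_gt1 Eq.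
  by exists q%:Z; split; [exact: pdiv_prime | rewrite -PoszM -Eq].
by exists (- q%:Z); split; [exact: pdiv_prime | rewrite NegzE mulNr -PoszM -Eq].
Qed.

Lemma count_sumn (T : Type) (a : pred T) (s : seq T) :
  count a s = (\sum_(y <- s) a y)%N.
Proof. by rewrite -sum1_count big_mkcond. Qed.

(* The coefficient of g in the m-th power of the group-ring element underline(s). *)
Fixpoint pow_coeff (V : zmodType) (s : seq V) (m : nat) (g : V) : nat :=
  if m is m'.+1 then (\sum_(x <- s) pow_coeff s m' (g - x))%N else g == 0.

Lemma pow_coeff_cons (V : zmodType) (x : V) s m g :
  pow_coeff (x :: s) m g =
  (\sum_(j < m.+1) 'C(m, j) * pow_coeff s (m - j) (g - x *+ j))%N.
Proof.
elim: m g => [|m IH] g.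
  by rewrite big_ord_recl big_ord0 /= subr0 mul1n addn0.
rewrite /= big_cons IH.
under eq_bigr do rewrite IH.
rewrite exchange_big /=.
set A := (X in (X + _)%N).
have EB : (\sum_(j < m.+1) \sum_(i <- s)
    'C(m, j) * pow_coeff s (m - j) (g - i - x *+ j))%N =
  (pow_coeff s m.+1 g + \sum_(j < m) 'C(m, j.+1) *
     pow_coeff s (m - j) (g - x *+ j.+1))%N.
  rewrite big_ord_recl /=; congr addn.
    by apply: eq_bigr => i _; rewrite bin0 mul1n subn0 mulr0n subr0.
  apply: eq_bigr => j _; rewrite -big_distrr /=; congr muln.
  have -> : (m - bump 0 j = (m - j).-1)%N by rewrite /bump /= subnS.
  have : (0 < m - j)%N by rewrite subn_gt0.
  case: (m - j)%N => [//|n] _ /=.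
  by apply: eq_bigr => i _; congr pow_coeff; rewrite addrAC.
rewrite EB big_ord_recl /= bin0 mul1n mulr0n subr0.
have EC : (\sum_(j < m.+1) 'C(m.+1, bump 0 j) *
     pow_coeff s (m.+1 - bump 0 j) (g - x *+ bump 0 j))%N =
   (\sum_(j < m) 'C(m, j.+1) * pow_coeff s (m - j) (g - x *+ j.+1) + A)%N.
  rewrite /A /bump /=; under eq_bigr do rewrite add1n binS subSS mulnDl.
  rewrite big_split /=; congr addn.
    by rewrite big_ord_recr /= bin_small // mul0n addn0.
  by apply: eq_bigr => j _; rewrite mulrS opprD addrA.
by rewrite EC addnCA (addnC A).
Qed.

(* Frobenius congruence in the group ring: the p-th power of a sum is congruent
   modulo p to the sum of the p-th powers. *)
Lemma pow_coeff_prime (V : zmodType) p (s : seq V) g : prime p ->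
  pow_coeff s p g = count (fun x => g == x *+ p) s %[mod p].
Proof.
move=> p_pr; elim: s => [|x s IH].
  by case: p p_pr => //= p' _; rewrite big_nil.
rewrite pow_coeff_cons /=.
case: p p_pr IH => // p' p_pr IH.
rewrite big_ord_recl big_ord_recr /=.
set M := (\sum_(i < p') _)%N.
have dvd_M : (p'.+1 %| M)%N.
  apply: dvdn_sum => j _; apply: dvdn_mulr; apply: prime_dvd_bin => //.
  by rewrite /bump /= add1n ltnS ltn_ord.
rewrite -(divnK dvd_M) bin0 mul1n mulr0n subr0 /bump /= add1n binn mul1n subnn /= subr_eq0.
rewrite -[(\sum_(y <- s) _)%N]/(pow_coeff s p'.+1 g).
by rewrite addnCA modnMDl -modnDml IH modnDml addnC.
Qed.

Section SchurRing.
Variables (F : fieldType) (R : Zsq -> Zsq -> Prop).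
Hypothesis charF : [pchar F] =i pred0.
Hypothesis schurR : is_schur_ring F R.

Lemma basic_refl g : R g g. Proof. by case: schurR. Qed.
Lemma basic_sym g h : R g h -> R h g. Proof. by case: schurR => _ [H _]; apply: H. Qed.
Lemma basic_trans g h l : R g h -> R h l -> R g l.
Proof. by case: schurR => _ [_ [H _]]; apply: H. Qed.
Lemma basic_enum g : exists s, enumerates R g s.
Proof. by case: schurR => _ [_ [_ [H _]]]; apply: H. Qed.
Lemma basic0 h : R 0 h <-> h = 0.
Proof. by case: schurR => _ [_ [_ [_ [H _]]]]; apply: H. Qed.
Lemma basic_opp g h : R g h <-> R (- g) (- h).
Proof. by case: schurR => _ [_ [_ [_ [_ [H _]]]]]; apply: H. Qed.

Definition in_span (f : Zsq -> F) := exists reps : seq (Zsq * F),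
  forall h, f h = \sum_(p <- reps) p.2 * ind F (R p.1 h).

Lemma prod_coeff_span g1 g2 s1 s2 : enumerates R g1 s1 -> enumerates R g2 s2 ->
  in_span (fun h => (prod_coeff s1 s2 h)%:R).
Proof. by case: schurR => _ [_ [_ [_ [_ [_ H]]]]]; apply: H. Qed.

Lemma ind_equiv (P Q : Prop) : (P <-> Q) -> ind F P = ind F Q.
Proof.
move=> PQ; rewrite /ind; case: excluded_middle_informative => p;
  case: excluded_middle_informative => q //; exfalso; tauto.
Qed.

Lemma ind_bool (b : bool) : ind F b = b%:R.
Proof. by rewrite /ind; case: excluded_middle_informative; case: b. Qed.

Lemma natf_inj m n : (m%:R : F) = n%:R -> m = n.
Proof.
have natf_eq0 : forall n', (n'%:R == 0 :> F) = (n' == 0)%N by apply/GRing.pcharf0P.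
wlog le_mn : m n / (m <= n)%N => [W E|E].
  by case: (leqP m n) => [|/ltnW] ?; [exact: W | symmetry; exact: W].
apply/eqP; rewrite eqn_leq le_mn /= -subn_eq0 -natf_eq0.
by rewrite natrB // E subrr.
Qed.

Lemma span_const f g h : in_span f -> R g h -> f g = f h.
Proof.
case=> reps E Rgh; rewrite !E; apply: eq_bigr => p _; congr (_ * _).
apply: ind_equiv; split => H; [exact: basic_trans H Rgh | exact: basic_trans H (basic_sym Rgh)].
Qed.

Lemma span_ext f f' : f =1 f' -> in_span f -> in_span f'.
Proof. by move=> E [r Er]; exists r => h; rewrite -E. Qed.

Lemma span0 : in_span (fun _ => 0).
Proof. by exists [::] => h; rewrite big_nil. Qed.

Lemma spanD f1 f2 : in_span f1 -> in_span f2 -> in_span (fun h => f1 h + f2 h).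
Proof. by case=> r1 E1 [r2 E2]; exists (r1 ++ r2) => h; rewrite big_cat E1 E2. Qed.

Lemma spanZ c f : in_span f -> in_span (fun h => c * f h).
Proof.
case=> r E; exists [seq (p.1, c * p.2) | p <- r] => h.
by rewrite big_map E mulr_sumr; apply: eq_bigr => p _ /=; rewrite mulrA.
Qed.

Lemma span_conv_basic q g s : enumerates R g s ->
  in_span (fun h => \sum_(x <- s) ind F (R q (h - x))).
Proof.
move=> es; have [sq eq] := basic_enum q.
apply: span_ext (prod_coeff_span eq es) => h.
have count_shift x : count (fun y => y + x == h) sq = ((h - x) \in sq).
  rewrite -(count_uniq_mem _ eq.1); apply: eq_count => y /=.
  by apply/eqP/eqP => [<-|->]; [rewrite addrK | rewrite subrK].
have -> : \sum_(x <- s) ind F (R q (h - x)) =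
          \sum_(x <- s) (count (fun y => y + x == h) sq)%:R.
  apply: eq_bigr => x _; rewrite count_shift -ind_bool; apply: ind_equiv.
  exact: iff_sym (eq.2 _).
rewrite -natr_sum /prod_coeff; congr (_%:R).
under eq_bigr do rewrite count_sumn.
by rewrite exchange_big /=; apply: eq_bigr => y _; rewrite count_sumn.
Qed.

Lemma span_conv f g s : in_span f -> enumerates R g s ->
  in_span (fun h => \sum_(x <- s) f (h - x)).
Proof.
case=> r E es.
apply: (@span_ext (fun h => \sum_(p <- r) p.2 * \sum_(x <- s) ind F (R p.1 (h - x)))).
  move=> h; under [RHS]eq_bigr do rewrite E.
  by rewrite exchange_big /=; apply: eq_bigr => p _; rewrite mulr_sumr.
elim: r {E} => [|p r IH]; first by apply: span_ext span0 => h; rewrite big_nil.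
apply: span_ext (spanD (spanZ p.2 (span_conv_basic p.1 es)) IH) => h.
by rewrite big_cons.
Qed.

Lemma prod_coeff_const s1 s2 g1 g2 g h :
  enumerates R g1 s1 -> enumerates R g2 s2 -> R g h ->
  prod_coeff s1 s2 g = prod_coeff s1 s2 h.
Proof.
move=> e1 e2 Rgh; apply: natf_inj.
exact: (span_const (f := fun h => (prod_coeff s1 s2 h)%:R)) (prod_coeff_span e1 e2) Rgh.
Qed.

(* The coefficient of u + v in underline(D_u) underline(D_v) is positive, and
   it is constant on the basic set of u + v. *)
Lemma basic_addE u v w : R (u + v) w ->
  exists u' v', [/\ R u u', R v v' & w = u' + v'].
Proof.
move=> Rw; have [su eu] := basic_enum u; have [sv ev] := basic_enum v.
have : prod_coeff su sv (u + v) != 0%N.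
  rewrite /prod_coeff sum_nat_seq_neq0; apply/hasP; exists u; first exact/eu.2/basic_refl.
  rewrite /= -lt0n -has_count; apply/hasP; exists v => //; exact/ev.2/basic_refl.
rewrite (prod_coeff_const eu ev Rw) /prod_coeff sum_nat_seq_neq0 => /hasP [u' /eu.2 Ru'].
by rewrite /= -lt0n -has_count => /hasP [v' /ev.2 Rv' /eqP <-]; exists u', v'.
Qed.

Lemma pow_coeff_span g s m : enumerates R g s -> in_span (fun h => (pow_coeff s m h)%:R).
Proof.
move=> es; elim: m => [|m IH] /=.
  exists [:: (0, 1)] => h; rewrite big_seq1 mul1r /= -ind_bool; apply: ind_equiv.
  by rewrite basic0; split => [/eqP|->].
by apply: span_ext (span_conv IH es) => h; rewrite natr_sum.
Qed.

Lemma pow_coeff_const g s m h h' : enumerates R g s -> R h h' ->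
  pow_coeff s m h = pow_coeff s m h'.
Proof. by move=> es Rh; apply: natf_inj; apply: span_const (pow_coeff_span m es) Rh. Qed.

(* Compare underline(D_y)^p modulo p at the two points y *+ p and g. *)
Lemma basic_mulrn_prime p y g : prime p -> R (y *+ p) g ->
  exists2 y', R y y' & g = y' *+ p.
Proof.
move=> p_pr Rg; have [s es] := basic_enum y.
have count_y : count (fun x => y *+ p == x *+ p) s = 1%N.
  have -> : count (fun x => y *+ p == x *+ p) s = count (pred1 y) s.
    by apply: eq_count => x /=; rewrite eq_sym (inj_eq (Zsq_mulrnI (prime_gt0 p_pr))).
  have y_s : y \in s by apply/es.2/basic_refl.
  by rewrite (count_uniq_mem _ es.1) y_s.
have : (0 < count (fun x => g == x *+ p) s)%N.
  rewrite lt0n; apply/negP => /eqP count0.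
  have := pow_coeff_prime s g p_pr; rewrite count0 -(pow_coeff_const p es Rg).
  by rewrite pow_coeff_prime // count_y mod0n modn_small ?prime_gt1.
by rewrite -has_count => /hasP [x /es.2 Rx /eqP ->]; exists x.
Qed.

Section AxisSubgroup.
Variable k : int.
Hypothesis k_neq0 : k != 0.
Hypothesis Ak_union : union_of_basic_sets R (cyc_ak k).

(* Write (i, 0) = (k u i, 0) + p (v i, 0) by Bezout for k and a prime p > |w.2| + |k|:
   the first summand lies in the A-subgroup <a^k>, the second is a p-th multiple. *)
Lemma basic_a_row i w : R (i, 0) w -> w.2 = 0.
Proof.
move=> Rw; have [p lt_p p_pr] := prime_above (`|w.2| + `|k|).
have gcd_kp : gcdz k p%:Z = 1.
  rewrite /gcdz /=; apply/eqP; change (coprime `|k| p).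
  rewrite coprime_sym prime_coprime //.
  apply/negP => /dvdn_leq; rewrite absz_gt0 k_neq0 => /(_ isT); lia.
have [u [v Bezout]] := Bezoutz k p%:Z; rewrite gcd_kp in Bezout.
have Ei : ((i, 0) : Zsq) = (k * (u * i), 0) + (v * i, 0) *+ p.
  rewrite Zsq_mulrn; apply: Zsq_ext => /=; last by rewrite mul0r addr0.
  by rewrite -[i in LHS]mulr1 -Bezout; ring.
rewrite Ei in Rw; have [u' [v' [Ru Rv Ew]]] := basic_addE Rw.
have [u'2 _] := Ak_union Ru (conj erefl (ex_intro _ (u * i) erefl)).
have [y _ Ev] := basic_mulrn_prime p_pr Rv.
have Ew2 : w.2 = y.2 * p%:Z by rewrite Ew Ev Zsq_mulrn /= u'2 add0r.
move: lt_p; rewrite Ew2 abszM absz_nat => lt_p.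
have : `|y.2|%N = 0%N by nia.
by move/eqP; rewrite absz_eq0 => /eqP ->; rewrite mul0r.
Qed.

Lemma basic_a_power t w : R (t, 0) w -> w = (t, 0) \/ w = (- t, 0).
Proof.
have [n] := ubnP `|t|; elim: n t w => // n IH t w lt_tn Rw.
have Ew : w = (w.1, 0) by apply: Zsq_ext => //; exact: basic_a_row Rw.
case: (ltnP 1 `|t|) => [t_gt1 | t_le1].
  have [p [q [p_pr Et]]] := int_prime_factor t_gt1.
  have : R ((q, 0) *+ p) w by rewrite Zsq_mulrn /= mul0r -Et.
  case/(basic_mulrn_prime p_pr) => y Ry ->.
  have lt_qn : (`|q| < n)%N.
    move: t_gt1 lt_tn; rewrite Et abszM absz_nat; have := prime_gt1 p_pr; nia.
  by case: (IH q y lt_qn Ry) => ->; [left|right];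
    rewrite Zsq_mulrn; apply: Zsq_ext; rewrite /= ?mul0r // Et ?mulNr.
have [t0|t1] : t = 0 \/ `|t|%N = 1%N by lia.
  by left; move: Rw; rewrite t0 => /basic0.
(* A unit (+-1, 0) is not a proper multiple, so by the step above its basic set
   contains no proper multiple either. *)
case: (ltnP 1 `|w.1|) => [w_gt1 | w_le1].
  have [p [q [p_pr Ew1]]] := int_prime_factor w_gt1.
  have : R ((q, 0) *+ p) (t, 0).
    by apply: basic_sym; rewrite Zsq_mulrn /= mul0r -Ew1 -Ew.
  case/(basic_mulrn_prime p_pr) => y _; rewrite Zsq_mulrn => -[Et _].
  move: t1 (prime_gt1 p_pr); rewrite Et abszM absz_nat => /eqP.
  by rewrite muln_eq1 => /andP [_ /eqP ->].
have [w0|w1] : w.1 = 0 \/ `|w.1|%N = 1%N by lia.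
  by move: Rw; rewrite Ew w0 => /basic_sym/basic0 [t0]; move: t1; rewrite t0.
rewrite Ew; have [->|->] : w.1 = t \/ w.1 = - t by lia.
  by left.
by right.
Qed.

Lemma basic_b_row d : R gen_b d -> d = (d.1, 1) \/ d = (d.1, -1).
Proof.
move=> Rd; suff : d.2 = 1 \/ d.2 = -1 by case=> Ed; [left|right]; apply: Zsq_ext.
case: (ltnP 1 `|d.2|) => [d2_gt1 | d2_le1].
  have [p [q [p_pr Eq]]] := int_prime_factor d2_gt1.
  have Ed : d = (d.1, 0) + (0, q) *+ p.
    by rewrite Zsq_mulrn; apply: Zsq_ext => /=; [rewrite mul0r addr0 | rewrite add0r Eq].
  have := basic_sym Rd; rewrite Ed => /basic_addE [u' [v' [Ru Rv Eb]]].
  have [y _ Ey] := basic_mulrn_prime p_pr Rv.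
  move: Eb (prime_gt1 p_pr); rewrite Ey Zsq_mulrn /gen_b => -[_].
  rewrite (basic_a_row Ru) add0r => /(congr1 absz); rewrite abszM absz_nat /= => /esym/eqP.
  by rewrite muln_eq1 => /andP [_ /eqP ->].
have [d0|//] : d.2 = 0 \/ (d.2 = 1 \/ d.2 = -1) by lia.
have Ed : d = (d.1, 0) by apply: Zsq_ext.
by move: (basic_sym Rd); rewrite Ed => /basic_a_row.
Qed.

Definition basic_shift (x0 : Zsq) (s : int) := R x0 (x0 + (s, 0)).

Lemma basic_bounded x0 : exists N, forall z, R x0 z -> (`|z.1| <= N)%N.
Proof.
have [s es] := basic_enum x0; exists (\sum_(z <- s) `|z.1|)%N => z /es.2 z_s.
by rewrite (bigD1_seq z) ?es.1 //= leq_addr.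
Qed.

Lemma basic_shift_not_periodic x0 u : u != 0 ->
  ~ (forall s, basic_shift x0 s -> basic_shift x0 (u + s)).
Proof.
move=> u_neq0 periodic; have [N boundN] := basic_bounded x0.
have shift_mul (n : nat) : basic_shift x0 (u * n%:Z).
  elim: n => [|n IH].
    by rewrite /basic_shift mulr0 (_ : x0 + (0, 0) = x0) ?addr0 //; exact: basic_refl.
  by have := periodic _ IH; rewrite intS mulrDr mulr1 addrC.
have := boundN _ (shift_mul (2 * N).+1); have := boundN _ (basic_refl x0).
move: u_neq0; rewrite -absz_eq0 /= => u_neq0 bound0 bound1.
have : (`|(u * ((2 * N).+1)%:Z)%R| <= 2 * N)%N by lia.
rewrite abszM absz_nat; nia.
Qed.

Lemma basic_translate_singleton c g h : (forall h, R c h -> h = c) ->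
  R g h -> R (g + c) (h + c).
Proof.
move=> single_c Rgh; have : R ((g + c) + (- c)) h by rewrite addrK.
case/basic_addE => [u' [v' [Ru Rv E]]].
have : R c (- v') by have := (basic_opp (- c) v').1 Rv; rewrite opprK.
by move/single_c => Ev; rewrite (_ : h + c = u') // E -Ev addrK.
Qed.

(* Split y = f + w with f ~ x0 + (J, 0) and w ~ (-J, 0) for J beyond the bound of the
   basic set; re-splitting f along any shift s of x0 forces the sign of w uniformly. *)
Lemma basic_shift_transfer x0 y : R x0 y ->
  (forall s, basic_shift x0 s -> R x0 (y + (s, 0))) \/
  (forall s, basic_shift x0 s -> R x0 (y - (s, 0))).
Proof.
move=> Ry; have [N boundN] := basic_bounded x0.
set J : int := ((2 * N).+1)%:Z.
have E0 : x0 = (x0 + (J, 0)) + (- J, 0) by apply: Zsq_ext => /=; lia.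
have := Ry; rewrite {1}E0 => /basic_addE [f [w [Rf Rw Ey]]].
have resplit s : basic_shift x0 s -> exists z', R x0 z' /\
    (f.1 = z'.1 + (J - s) \/ f.1 = z'.1 - (J - s)) /\ f.2 = z'.2.
  move=> Rs; have : R ((x0 + (s, 0)) + (J - s, 0)) f.
    by rewrite (_ : _ + _ = x0 + (J, 0)) //; apply: Zsq_ext => /=; lia.
  case/basic_addE => [z' [w' [Rz Rw' Ef]]]; exists z'; split; first exact: basic_trans Rs Rz.
  by case: (basic_a_power Rw') => Ew'; rewrite Ef Ew' /=; split; lia.
have bound_x0 := boundN _ (basic_refl x0); have bound_y := boundN _ Ry.
have Ey1 : y.1 = f.1 + w.1 by rewrite Ey.
have Ey2 : y.2 = f.2 + w.2 by rewrite Ey.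
case: (basic_a_power Rw) => Ew; rewrite Ew /= in Ey1 Ey2; [left|right] => s Rs;
  have [z' [Rz [Ef1 Ef2]]] := resplit s Rs; have bound_z := boundN _ Rz;
  have := boundN _ Rs => /= bound_s.
- case: Ef1 => Ef1; last by exfalso; lia.
  by rewrite (_ : _ + _ = z') //; apply: Zsq_ext => /=; lia.
- case: Ef1 => Ef1; first by exfalso; lia.
  by rewrite (_ : _ - _ = z') //; apply: Zsq_ext => /=; lia.
Qed.

Lemma basic_shift_unique x0 u w : basic_shift x0 u -> basic_shift x0 w ->
  u != 0 -> w != 0 -> u = w.
Proof.
have reflect_shift v : basic_shift x0 v -> v != 0 ->
    forall s, basic_shift x0 s -> basic_shift x0 (v - s).
  move=> Rv v_neq0; case: (basic_shift_transfer Rv) => transfer.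
    exfalso; apply: (basic_shift_not_periodic v_neq0) => s Rs.
    by have := transfer s Rs; rewrite /basic_shift (_ : _ + _ = x0 + (v + s, 0)) //;
      apply: Zsq_ext => /=; lia.
  move=> s Rs; have := transfer s Rs.
  by rewrite /basic_shift (_ : _ - _ = x0 + (v - s, 0)) //; apply: Zsq_ext => /=; lia.
move=> Ru Rw u_neq0 w_neq0; apply/eqP; rewrite -subr_eq0; apply/negPn/negP => uw.
apply: (basic_shift_not_periodic uw) => s Rs.
have := reflect_shift u Ru u_neq0 _ (reflect_shift w Rw w_neq0 _ Rs).
by rewrite /basic_shift (_ : u - (w - s) = u - w + s) //; lia.
Qed.

Lemma basic_a_power_sym : R (1, 0) (-1, 0) -> forall t, R (t, 0) (- t, 0).
Proof.
move=> Ra t; have [//|not_sym] := classic (R (t, 0) (- t, 0)).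
have single_t h : R (t, 0) h -> h = (t, 0).
  by move=> Rh; case: (basic_a_power Rh) => // Eh; move: Rh; rewrite Eh.
have := basic_translate_singleton single_t Ra; rewrite !Zsq_shift.
case/basic_a_power => -[]; [lia | move=> t0].
by rewrite (_ : t = 0) ?oppr0; [exact: basic_refl | lia].
Qed.

Lemma basic_translate_a : ~ R (1, 0) (-1, 0) ->
  forall m g h, R g h -> R (g + (m, 0)) (h + (m, 0)).
Proof.
move=> not_sym.
have single_sgn c : c = 1 \/ c = -1 -> forall h, R (c, 0) h -> h = (c, 0).
  move=> c_unit h Rh; case: (basic_a_power Rh) => // Eh; exfalso; apply: not_sym.
  by case: c_unit Eh Rh => -> -> //; rewrite opprK => /basic_sym.
have translate_n c n g h : c = 1 \/ c = -1 -> R g h ->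
    R (g + (c, 0) *+ n) (h + (c, 0) *+ n).
  move=> c_unit; elim: n => [|n IH] Rgh; first by rewrite !mulr0n !addr0.
  by rewrite !mulrSr !addrA; apply: basic_translate_singleton (single_sgn c c_unit) (IH Rgh).
case=> n g h Rgh.
  by have := translate_n 1 n g h (or_introl erefl) Rgh; rewrite Zsq_mulrn /= !mul0r mul1r.
have := translate_n (-1) n.+1 g h (or_intror erefl) Rgh.
by rewrite Zsq_mulrn /= !mul0r NegzE mulN1r.
Qed.

Lemma b_shiftE m : gen_b + (m, 0) = (m, 1).
Proof. by rewrite Zsq_shift add0r. Qed.

(* If a is alone in its basic set, translation by a permutes the basic sets, so the
   a-shifts of b inside D would be periodic. *)
Lemma basic_b_top_row_trivial : ~ R (1, 0) (-1, 0) ->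
  forall m, R gen_b (m, 1) -> m = 0.
Proof.
move=> not_sym m Rm; apply/eqP; apply: contraT => m_neq0; exfalso.
apply: (basic_shift_not_periodic (x0 := gen_b) m_neq0) => s Rs.
have := basic_translate_a not_sym m Rs; rewrite b_shiftE => /(basic_trans Rm).
by rewrite /basic_shift (_ : gen_b + (m + s, 0) = gen_b + (s, 0) + (m, 0)) //;
  apply: Zsq_ext => /=; lia.
Qed.

Lemma basic_b_top_row m m' : m != 0 -> R gen_b (m, 1) -> R gen_b (m', 1) ->
  m' = 0 \/ m' = m.
Proof.
move=> m_neq0 Rm Rm'; have [->|m'_neq0] := eqVneq m' 0; [by left | right].
by apply: (basic_shift_unique (x0 := gen_b)); rewrite /basic_shift ?b_shiftE.
Qed.

Lemma basic_b_rows_sum_sym i x : R (1, 0) (-1, 0) ->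
  R gen_b (i, 1) -> R gen_b (x, -1) ->
  exists i' x', [/\ R gen_b (i', 1), R gen_b (x', -1) & - (i + x) = i' + x'].
Proof.
move=> Ra Ri Rx; have := basic_a_power_sym Ra (i + x).
rewrite (_ : (i + x, 0) = (i, 1) + (x, -1)); last by apply: Zsq_ext => /=; lia.
case/basic_addE => [u' [v' [/(basic_trans Ri) Ru /(basic_trans Rx) Rv E]]].
move: (congr1 fst E) (congr1 snd E) => /= E1 E2.
case: (basic_b_row Ru) => Eu; case: (basic_b_row Rv) => Ev;
  rewrite Eu Ev /= in E2; try lia.
- by exists u'.1, v'.1; rewrite -Eu -Ev.
- by exists v'.1, u'.1; rewrite -Eu -Ev E1 addrC.
Qed.

Lemma basic_b_bottom_row m x : m != 0 -> R gen_b (m, 1) -> R gen_b (x, -1) ->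
  exists x1, [/\ R gen_b (x1, -1), R gen_b (x1 + m, -1) &
    forall x', R gen_b (x', -1) -> x' = x1 \/ x' = x1 + m].
Proof.
move=> m_neq0 Rm Rx.
have [x1 Rx1 Rx1m] : exists2 x1, R gen_b (x1, -1) & R gen_b (x1 + m, -1).
  have shift_m : basic_shift gen_b m by rewrite /basic_shift b_shiftE.
  case: (basic_shift_transfer Rx) => /(_ m shift_m); first by rewrite Zsq_shift; exists x.
  by exists (x - m); rewrite ?subrK // (_ : _ - _ = (x - m, -1)) //; apply: Zsq_ext.
exists x1; split => // x' Rx'.
have [E|d_neq0] := eqVneq (x' - x1) 0; [left; lia | right].
suff : x' - x1 = m by lia.
apply: (basic_shift_unique (x0 := (x1, -1))) => //; rewrite /basic_shift Zsq_shift.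
- by apply: basic_trans (basic_sym Rx1) _; rewrite addrC subrK.
- exact: basic_trans (basic_sym Rx1) Rx1m.
Qed.

(* The sums of the two rows of D form a set closed under negation; for the rows
   {0, m} and {x1, x1 + m} this forces x1 = -m. *)
Lemma basic_b_bottom_row_sym m x : R (1, 0) (-1, 0) -> m != 0 ->
  R gen_b (m, 1) -> R gen_b (x, -1) ->
  forall x', R gen_b (x', -1) <-> x' = - m \/ x' = 0.
Proof.
move=> Ra m_neq0 Rm Rx.
have [x1 [Rx1 Rx1m bottom]] := basic_b_bottom_row m_neq0 Rm Rx.
have top := basic_b_top_row m_neq0 Rm.
have x1E : x1 = - m.
  move: m_neq0 => /eqP m_neq0.
  have [i1 [y1 [Ri1 Ry1 E1]]] := basic_b_rows_sum_sym Ra (basic_refl gen_b) Rx1.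
  have [i2 [y2 [Ri2 Ry2 E2]]] := basic_b_rows_sum_sym Ra Rm Rx1.
  have [i3 [y3 [Ri3 Ry3 E3]]] := basic_b_rows_sum_sym Ra Rm Rx1m.
  case: (top _ Ri1) => ?; case: (bottom _ Ry1) => ?;
  case: (top _ Ri2) => ?; case: (bottom _ Ry2) => ?;
  case: (top _ Ri3) => ?; case: (bottom _ Ry3) => ?; subst; lia.
move=> x'; split => [/bottom|].
  by rewrite x1E => -[] ->; [left | right; rewrite addNr].
by case=> ->; [rewrite -x1E | rewrite -(addNr m) -x1E].
Qed.

Lemma basic_b_bottom_unique x x' : (forall m, R gen_b (m, 1) -> m = 0) ->
  R gen_b (x, -1) -> R gen_b (x', -1) -> x' = x.
Proof.
move=> top0 Rx Rx'.
have shift_d : basic_shift (x, -1) (x' - x).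
  by apply: basic_trans (basic_sym Rx) _; rewrite Zsq_shift addrC subrK.
case: (basic_shift_transfer (basic_sym Rx)) => /(_ _ shift_d) /(basic_trans Rx).
  by rewrite b_shiftE => /top0; lia.
have -> : gen_b - (x' - x, 0) = (x - x', 1) by apply: Zsq_ext => /=; lia.
by move/top0; lia.
Qed.

Lemma basic_b_with_top_shift m : m != 0 -> R gen_b (m, 1) ->
  (forall h, R gen_b h <-> h = (m, 1) \/ h = (0, 1)) \/
  (forall h, R gen_b h <-> [\/ h = (0, 1), h = (m, 1), h = (0, -1) | h = (- m, -1)]).
Proof.
move=> m_neq0 Rm; have top := basic_b_top_row m_neq0 Rm.
have Ra : R (1, 0) (-1, 0).
  have [//|not_sym] := classic (R (1, 0) (-1, 0)).
  by move: m_neq0; rewrite (basic_b_top_row_trivial not_sym Rm).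
have [[x Rx] | no_bottom] := classic (exists x, R gen_b (x, -1)); [right | left] => h.
- have bottom := basic_b_bottom_row_sym Ra m_neq0 Rm Rx.
  split => [Rh|].
    case: (basic_b_row Rh) => Eh; rewrite Eh in Rh *.
      by case: (top _ Rh) => ->; [constructor 1 | constructor 2].
    by case/bottom: Rh => ->; [constructor 4 | constructor 3].
  case=> ->; [exact: basic_refl | exact: Rm | |]; apply/bottom; by [right | left].
- split => [Rh|[] ->]; [|exact: Rm | exact: basic_refl].
  case: (basic_b_row Rh) => Eh; rewrite Eh in Rh *.
    by case: (top _ Rh) => ->; [right | left].
  by exfalso; apply: no_bottom; exists h.1.
Qed.

Lemma basic_b_without_top_shift : (forall m, R gen_b (m, 1) -> m = 0) ->
  (forall h, R gen_b h <-> h = (0, 1)) \/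
  exists x, forall h, R gen_b h <-> h = (x, -1) \/ h = (0, 1).
Proof.
move=> top0.
have [[x Rx] | no_bottom] := classic (exists x, R gen_b (x, -1));
  [right; exists x | left] => h; split.
- move=> Rh; case: (basic_b_row Rh) => Eh; rewrite Eh in Rh *.
    by rewrite (top0 _ Rh); right.
  by rewrite (basic_b_bottom_unique top0 Rx Rh); left.
- by case=> ->; [exact: Rx | exact: basic_refl].
- move=> Rh; case: (basic_b_row Rh) => Eh; rewrite Eh in Rh *.
    by rewrite (top0 _ Rh).
  by exfalso; apply: no_bottom; exists h.1.
- by move=> ->; exact: basic_refl.
Qed.

End AxisSubgroup.
End SchurRing.

Theorem theorem3p3 (F : fieldType) (R : Zsq -> Zsq -> Prop) (k : int) :
  [pchar F] =i pred0 ->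
  is_schur_ring F R ->
  k != 0 ->
  union_of_basic_sets R (cyc_ak k) ->
  let D := R gen_b in
  (forall h, D h <-> h = (0, 1)) \/
  (forall h, D h <-> h = (0, 1) \/ h = (0, -1)) \/
  (exists i0 : int, i0 != 0 /\
     forall h, D h <-> h = (i0, 1) \/ h = (0, 1)) \/
  (exists i1 : int, i1 != 0 /\
     forall h, D h <-> h = (i1, -1) \/ h = (0, 1)) \/
  (exists i2 : int, i2 != 0 /\
     forall h, D h <-> [\/ h = (0, 1), h = (i2, 1), h = (0, -1) | h = (- i2, -1)]).
Proof.
move=> charF schurR k_neq0 Ak_union D.
have [[m [m_neq0 Rm]] | no_top] := classic (exists m, m != 0 /\ R gen_b (m, 1)).
  case: (basic_b_with_top_shift charF schurR k_neq0 Ak_union m_neq0 Rm) => Dm.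
    by right; right; left; exists m.
  by do 4 right; exists m.
have top0 m : R gen_b (m, 1) -> m = 0.
  by move=> Rm; apply/eqP; apply: contraT => m_neq0; exfalso; apply: no_top; exists m.
case: (basic_b_without_top_shift charF schurR k_neq0 Ak_union top0) => [|[x Dx]].
  by left.
have [x0|x_neq0] := eqVneq x 0.
  by right; left => h; rewrite /D Dx x0; tauto.
by do 3 right; left; exists x.
Qed.
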